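(* Let $\pi=\pi_1\cdots\pi_n$ be a permutation of $\{1,\dots,n\}$. The Schröder insertion tableau $P(\pi)$ has a single column (i.e. every row of $P(\pi)$ has at most $2$ cells) if and only if $\pi$ avoids both patterns $123$ and $213$.
   Context: A Schröder tableau consists of rows $1,2,\dots$; row $r$ has $\lambda_r$ cells at positions $1,\dots,\lambda_r$, each filled with a number; cells at odd positions are upper triangles, at even positions lower triangles, and positions $2m-1,2m$ form the $m$-th square column. The Schröder insertion tableau $P(\pi)$ is built as follows. Start with $P$ having one row containing $\pi_1$. For $k=2,\dots,n$, insert $\alpha=\pi_k$ into row $i=1$ by the rule: if row $i$ is empty or $\alpha$ is larger than all its entries, place $\alpha$ in a new cell at the end of row $i$ and stop. Otherwise let $j$ be the position in row $i$ of the smallest entry larger than $\alpha$. If $j$ is even: remove the entry $\beta$ at position $j$, write $\alpha$ there, and insert $\beta$ into row $i+1$ by the same rule. If $j$ is odd and position $j+1$ exists in row $i$ with entry $\beta$: move the entry of position $j$ to position $j+1$, write $\alpha$ at position $j$, and insert $\beta$ into row $i+1$. If $j$ is odd and is the last position of row $i$: move the entry of position $j$ into a new cell at position $j+1$ at the end of row $i$, write $\alpha$ at position $j$, and stop. A permutation $\tau$ contains a pattern $\sigma$ of length $k$ if some subsequence $\tau_{i_1}\cdots\tau_{i_k}$ ($i_1<\dots<i_k$) is order-isomorphic to $\sigma$; otherwise it avoids $\sigma$. *)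

From mathcomp Require Import all_boot.
Set Implicit Arguments. Unset Strict Implicit. Unset Printing Implicit Defensive.

(* Position p (1-based, as in the paper) of a row is list index p-1 (0-based).
   Hence paper-odd positions (upper triangles) are even list indices. *)
Definition row := seq nat.
Definition tableau := seq row.

(* 0-based index of the smallest entry of r larger than a (assumes one exists) *)
Definition smallest_larger_idx (r : row) (a : nat) : nat :=
  let bigger := [seq x <- r | a < x] in
  let m := foldr minn (head 0 bigger) bigger in
  index m r.

Definition row_insert (r : row) (a : nat) : row * option nat :=
  if all (fun x => x < a) r then (rcons r a, None) else
  let j := smallest_larger_idx r a in
  if odd j then (* paper position j+1 is even *)
    (set_nth 0 r j a, Some (nth 0 r j))
  else if j.+1 < size r then
    (set_nth 0 (set_nth 0 r j.+1 (nth 0 r j)) j a, Some (nth 0 r j.+1))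
  else
    (set_nth 0 (rcons r (nth 0 r j)) j a, None).

Fixpoint tab_insert (t : tableau) (a : nat) : tableau :=
  match t with
  | [::] => [:: [:: a]]
  | r :: t' =>
      let: (r', ob) := row_insert r a in
      match ob with
      | None => r' :: t'
      | Some b => r' :: tab_insert t' b
      end
  end.

Definition schroder_P (pi : seq nat) : tableau :=
  match pi with
  | [::] => [::]
  | p1 :: rest => foldl tab_insert [:: [:: p1]] rest
  end.

Definition is_perm (n : nat) (pi : seq nat) : Prop := perm_eq pi (iota 1 n).

Definition order_iso (s t : seq nat) : bool :=
  (size s == size t) &&
  [forall i : 'I_(size s), forall j : 'I_(size s),
     (nth 0 s i < nth 0 s j) == (nth 0 t i < nth 0 t j)].

Definition contains (tau sigma : seq nat) : Prop :=
  exists s, subseq s tau /\ order_iso s sigma.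

Definition avoids (tau sigma : seq nat) : Prop := ~ contains tau sigma.

From mathcomp Require Import all_boot zify.
Set Implicit Arguments. Unset Strict Implicit. Unset Printing Implicit Defensive.

(* As long as no letter has two smaller letters before it, P is the
   single-column tableau filled row by row with the letters read so far in
   increasing order: a new letter either lies below all of them (every entry
   moves one cell forward) or just above the minimum (all but the minimum move).
   The first letter exceeding two earlier letters exceeds the two entries of the
   first row, so it is appended there, and the first row never shrinks again.
   Such a letter is exactly the "3" of an occurrence of 123 or 213. *)

Lemma row_insert_single_below a x : x < a -> row_insert [:: a] x = ([:: x; a], None).
Proof.
move=> xa; have ax : (a < x) = false by lia.
by rewrite /row_insert /smallest_larger_idx /= ax xa /= minnn eqxx.
Qed.

Lemma row_insert_single_above m x : m < x -> row_insert [:: m] x = ([:: m; x], None).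
Proof. by move=> mx; rewrite /row_insert /= mx. Qed.

Lemma row_insert_pair_below a b x :
  x < a -> a < b -> row_insert [:: a; b] x = ([:: x; a], Some b).
Proof.
move=> xa ab; have xb : x < b by lia.
have ax : (a < x) = false by lia.
rewrite /row_insert /smallest_larger_idx /= ax xa xb /=.
have -> : minn a (minn b a) = a by lia.
by rewrite eqxx.
Qed.

Lemma row_insert_pair_between m b x :
  m < x -> x < b -> row_insert [:: m; b] x = ([:: m; x], Some b).
Proof.
move=> mx xb; have bx : (b < x) = false by lia.
have xm : (x < m) = false by lia.
have mb : (m == b) = false by apply/eqP; lia.
by rewrite /row_insert /smallest_larger_idx /= bx xm xb mx /= minnn mb eqxx.
Qed.

Lemma row_insert_pair_above m b x :
  m < x -> b < x -> row_insert [:: m; b] x = ([:: m; b; x], None).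
Proof. by move=> mx bx; rewrite /row_insert /= mx bx. Qed.

Lemma size_row_insert r a : size r <= size (row_insert r a).1.
Proof.
rewrite /row_insert; case: ifP => _; first by rewrite size_rcons.
case: ifP => _ /=; first by rewrite size_set_nth; lia.
case: ifP => _ /=; first by rewrite !size_set_nth; lia.
by rewrite size_set_nth size_rcons; lia.
Qed.

Lemma tab_insert_cons r t a : tab_insert (r :: t) a =
  match row_insert r a with (r', None) => r' :: t | (r', Some b) => r' :: tab_insert t b end.
Proof. by []. Qed.

Definition first_row_size (t : tableau) := size (head [::] t).

Lemma first_row_size_tab_insert t a : first_row_size t <= first_row_size (tab_insert t a).
Proof.
case: t => [|r t] //; rewrite tab_insert_cons /first_row_size /=.
by have := size_row_insert r a; case: row_insert => r' [b|].
Qed.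

Lemma first_row_size_foldl t w : first_row_size t <= first_row_size (foldl tab_insert t w).
Proof.
elim: w t => [|x w IH] t //=.
exact: leq_trans (first_row_size_tab_insert t x) (IH _).
Qed.

Fixpoint column_tableau (s : seq nat) : tableau :=
  match s with
  | a :: b :: l => [:: a; b] :: column_tableau l
  | [:: a] => [:: [:: a]]
  | [::] => [::]
  end.

Lemma size_column_tableau_row s r : r \in column_tableau s -> size r <= 2.
Proof.
move: {2}(size s) (leqnn (size s)) => n.
elim: n s => [|n IH] [|a [|b l]] //= sz_s; rewrite ?inE; try by move/eqP->.
by case/orP => [/eqP->|]; last (apply: IH; lia).
Qed.

Lemma tab_insert_column_below s x :
  path ltn x s -> tab_insert (column_tableau s) x = column_tableau (x :: s).
Proof.
move: {2}(size s) (leqnn (size s)) => n.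
elim: n s x => [|n IH] [|a [|b l]] x // sz_s.
- by case/andP => xa _; rewrite [column_tableau _]/= tab_insert_cons row_insert_single_below.
- case/and3P => xa ab bl.
  rewrite [column_tableau (a :: _)]/= tab_insert_cons row_insert_pair_below // IH //=.
  by move: sz_s => /=; lia.
Qed.

Lemma tab_insert_column_above_min m s x : m < x -> path ltn x s ->
  tab_insert (column_tableau (m :: s)) x = column_tableau (m :: x :: s).
Proof.
case: s => [|b l] mx; first by rewrite tab_insert_cons row_insert_single_above.
case/andP => xb bl.
by rewrite [column_tableau _]/= tab_insert_cons row_insert_pair_between // tab_insert_column_below //= xb.
Qed.

Lemma count_lt_path_above m l x : path ltn m l -> x <= m -> count (fun y => y < x) l = 0.
Proof.
elim: l m => [|y l IH] m //= /andP[my ml] xm.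
rewrite ltnNge (ltnW (leq_ltn_trans xm my)) (IH y) //.
exact: ltnW (leq_ltn_trans xm my).
Qed.

Lemma count_lt0_path s x : sorted ltn s -> count (fun y => y < x) s = 0 -> x \notin s ->
  path ltn x s.
Proof.
case: s => [|m l] //= ml; case: (ltnP m x) => //= xm _.
by rewrite inE negb_or => /andP[/eqP neq_xm _]; rewrite ml andbT; lia.
Qed.

Lemma count_lt1_path s x : sorted ltn s -> count (fun y => y < x) s = 1 -> x \notin s ->
  exists m l, [/\ s = m :: l, m < x & path ltn x l].
Proof.
case: s => [|m l] //= ml; case: (ltnP m x) => [mx [l0]|xm]; last by rewrite (count_lt_path_above ml xm).
rewrite inE negb_or => /andP[_ xl]; exists m, l; split => //.
exact: count_lt0_path (path_sorted ml) l0 xl.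
Qed.

Lemma count_lt2_path s x : sorted ltn s -> 1 < count (fun y => y < x) s ->
  exists m b l, [/\ s = m :: b :: l, m < x & b < x].
Proof.
case: s => [|m [|b l]] //=; first by case: (m < x).
case/andP => mb bl; case: (ltnP b x) => bx; last by rewrite (count_lt_path_above bl bx); case: (m < x).
by exists m, b, l; split => //; lia.
Qed.

Lemma tab_insert_column_few_smaller s x :
  sorted ltn s -> x \notin s -> count (fun y => y < x) s < 2 ->
  exists s', [/\ sorted ltn s', perm_eq s' (x :: s)
             & tab_insert (column_tableau s) x = column_tableau s'].
Proof.
move=> s_sorted x_notin; case E: count => [|[|//]] _.
  have xs := count_lt0_path s_sorted E x_notin.
  by exists (x :: s); rewrite tab_insert_column_below.
have [m [l [-> mx xl]]] := count_lt1_path s_sorted E x_notin.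
exists (m :: x :: l); split; first by rewrite /= mx.
  by rewrite -(cat1s m) -(cat1s x) perm_catCA.
exact: tab_insert_column_above_min.
Qed.

Lemma tab_insert_column_two_smaller s x :
  sorted ltn s -> 1 < count (fun y => y < x) s ->
  2 < first_row_size (tab_insert (column_tableau s) x).
Proof.
move=> s_sorted two; have [m [b [l [-> mx bx]]]] := count_lt2_path s_sorted two.
by rewrite [column_tableau _]/= tab_insert_cons row_insert_pair_above.
Qed.

Fixpoint two_smaller_before (u w : seq nat) : bool :=
  if w is x :: w' then (1 < count (fun y => y < x) u) || two_smaller_before (rcons u x) w'
  else false.

Lemma two_smaller_beforeP u w :
  reflect (exists w1 x w2, w = w1 ++ x :: w2 /\ 1 < count (fun y => y < x) (u ++ w1))
          (two_smaller_before u w).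
Proof.
elim: w u => [|x w IH] u /=.
  by constructor; case=> [[|? ?] [? [? []]]].
apply: (iffP orP) => [[two|/IH [w1 [y [w2 [-> two]]]]]|].
- by exists [::], x, w; split; rewrite ?cats0.
- by exists (x :: w1), y, w2; split; rewrite // -cat_rcons.
case=> [[|z w1] [y [w2 [/= [<- Ew] two]]]]; first by left; rewrite cats0 in two.
by right; apply/IH; exists w1, y, w2; rewrite cat_rcons.
Qed.

Lemma foldl_tab_insert_column u w s :
  uniq (u ++ w) -> sorted ltn s -> perm_eq s u ->
  if two_smaller_before u w
  then is_true (2 < first_row_size (foldl tab_insert (column_tableau s) w))
  else exists s', foldl tab_insert (column_tableau s) w = column_tableau s'.
Proof.
elim: w u s => [|x w IH] u s uniq_uw s_sorted perm_su /=; first by exists s.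
have count_su : count (fun y => y < x) s = count (fun y => y < x) u by apply/permP.
have x_notin : x \notin s.
  by rewrite (perm_mem perm_su); move: uniq_uw; rewrite cat_uniq /= => /and3P[_ /norP[]].
case: ltnP => [two | few] /=.
  apply: leq_trans (first_row_size_foldl _ _).
  by apply: tab_insert_column_two_smaller; rewrite ?count_su.
rewrite -count_su -ltnS in few.
have [s' [s'_sorted perm_s' ->]] := tab_insert_column_few_smaller s_sorted x_notin few.
apply: IH => //; first by rewrite cat_rcons.
by apply: perm_trans perm_s' _; rewrite perm_sym perm_rcons perm_cons perm_sym.
Qed.

Lemma order_iso3 a b c x y z :
  (a < b) = (x < y) -> (b < c) = (y < z) -> (a < c) = (x < z) ->
  (b < a) = (y < x) -> (c < b) = (z < y) -> (c < a) = (z < x) ->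
  order_iso [:: a; b; c] [:: x; y; z].
Proof.
move=> e1 e2 e3 e4 e5 e6; apply/andP; split=> //; apply/forallP => i; apply/forallP => j.
by case: i => [[|[|[|i]]] ?] //; case: j => [[|[|[|j]]] ?] //=; rewrite ?ltnn ?e1 ?e2 ?e3 ?e4 ?e5 ?e6.
Qed.

Lemma two_smaller_before_contains pi : uniq pi -> two_smaller_before [::] pi ->
  contains pi [:: 1; 2; 3] \/ contains pi [:: 2; 1; 3].
Proof.
move=> uniq_pi /two_smaller_beforeP [w1 [x [w2 [def_pi two]]]].
set f := [seq y <- w1 | y < x].
have size_f : 1 < size f by rewrite size_filter.
have uniq_f : uniq f by apply: filter_uniq; move: uniq_pi; rewrite def_pi cat_uniq => /andP[].
have sub_f : subseq f w1 := filter_subseq _ w1.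
case Ef : f size_f uniq_f sub_f => [|a [|b r]] //= _ /andP[].
rewrite inE negb_or => /andP[neq_ab _] _ sub_ab.
have : a \in f by rewrite Ef inE eqxx.
have : b \in f by rewrite Ef !inE eqxx orbT.
rewrite !mem_filter => /andP[bx _] /andP[ax _].
have sub_abx : subseq [:: a; b; x] pi.
  rewrite def_pi -[[:: a; b; x]]/([:: a; b] ++ [:: x]); apply: cat_subseq.
    by apply: subseq_trans sub_ab; rewrite /= !eqxx sub0seq.
  by rewrite /= eqxx sub0seq.
case: (ltnP a b) => [lt_ab | le_ba]; [left | right]; exists [:: a; b; x]; split => //;
  apply: order_iso3; lia.
Qed.

Lemma contains_two_smaller_before pi sigma : uniq pi ->
  sigma \in [:: [:: 1; 2; 3]; [:: 2; 1; 3]] -> contains pi sigma -> two_smaller_before [::] pi.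
Proof.
move=> uniq_pi sigma_in [s [sub_s /andP[/eqP size_s /forallP iso_s]]].
have {}sigma_in : sigma = [:: 1; 2; 3] \/ sigma = [:: 2; 1; 3].
  by move: sigma_in; rewrite !inE => /orP[]/eqP ->; [left | right].
have size3 : size s = 3 by rewrite size_s; case: sigma_in => ->.
case: s size_s size3 sub_s iso_s => [|a [|b [|c [|? ?]]]] //= _ _ sub_s iso_s.
have lt_to_c i (lt_i2 : i < 2) : nth 0 [:: a; b; c] i < c.
  move/forallP: (iso_s (Ordinal (ltn_trans lt_i2 (ltnSn 2)))) => /(_ (Ordinal (ltnSn 2))) /eqP /= ->.
  by case: sigma_in => ->; case: i lt_i2 => [|[]].
have c_in : c \in pi by apply: (mem_subseq sub_s); rewrite !inE eqxx !orbT.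
case/splitPr: c_in uniq_pi sub_s => w1 w2 uniq_pi sub_s.
apply/two_smaller_beforeP; exists w1, c, w2; split => //.
move: sub_s; rewrite -[[:: a; b; c]]/([:: a; b] ++ [:: c]) uniq_subseq_pivot // => /andP[sub_ab _].
apply: leq_trans (leq_count_subseq _ sub_ab).
by rewrite /= (lt_to_c 0) // (lt_to_c 1).
Qed.

Lemma avoids_123_213P pi : uniq pi ->
  (avoids pi [:: 1; 2; 3] /\ avoids pi [:: 2; 1; 3]) <-> ~~ two_smaller_before [::] pi.
Proof.
move=> uniq_pi; split.
  by case=> no123 no213; apply/negP => /(two_smaller_before_contains uniq_pi) [].
by move/negP=> none; split=> /(contains_two_smaller_before uniq_pi) => /(_ isT).
Qed.

Theorem mainTheorem9 (n : nat) (pi : seq nat) :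
  is_perm n pi ->
  ((forall r, r \in schroder_P pi -> size r <= 2) <->
   (avoids pi [:: 1; 2; 3] /\ avoids pi [:: 2; 1; 3])).
Proof.
move=> perm_pi; have uniq_pi : uniq pi by rewrite (perm_uniq perm_pi) iota_uniq.
rewrite (avoids_123_213P uniq_pi).
case: pi uniq_pi {perm_pi} => [|p rest] uniq_pi; first by [].
have := @foldl_tab_insert_column [:: p] rest [:: p] uniq_pi (erefl _) (perm_refl _).
rewrite /schroder_P -[[:: [:: p]]]/(column_tableau [:: p]) /=.
case: two_smaller_before => [wide | [s ->]]; split=> // first_rows_small.
  case: foldl wide first_rows_small => [|r t] //= wide /(_ r).
  by rewrite inE eqxx leqNgt /first_row_size /= wide => /(_ isT).
exact: size_column_tableau_row.
Qed.
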